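(* For every integer $k\geq 3$, the set of odd positive integers not in $\mathcal F(k)$ is nonempty and finite, and $\Gamma(k)\leq 3k-4$. Moreover, $\displaystyle\limsup_{k\to\infty}\frac{\Gamma(k)}{k}=3$.
   Context: The Thue–Morse word is $\mathbf t=\mathbf t_1\mathbf t_2\cdots$ where $\mathbf t_i\in\{0,1\}$ has the parity of the number of $1$'s in the binary expansion of $i-1$. For positive integers $\alpha\le\beta$, $\langle\alpha,\beta\rangle=\mathbf t_\alpha\cdots\mathbf t_\beta$. A $k$-anti-power is a word $w_1\cdots w_k$ with $w_1,\dots,w_k$ pairwise distinct words of equal length. $\mathcal F(k)$ is the set of odd positive integers $m$ such that $\langle 1,km\rangle$ is a $k$-anti-power. $\Gamma(k)=\sup\big((2\mathbb Z^+-1)\setminus\mathcal F(k)\big)$, the largest odd positive integer not in $\mathcal F(k)$. *)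

From Stdlib Require Import ClassicalEpsilon.
From mathcomp Require Import all_boot all_order all_algebra.
Set Implicit Arguments. Unset Strict Implicit. Unset Printing Implicit Defensive.

(* number of 1's in the binary expansion of n (bits of index >= n vanish) *)
Definition popcount (n : nat) : nat := \sum_(i < n) ((n %/ 2 ^ i) %% 2).

(* Thue--Morse word, 1-indexed: t_i = parity of popcount (i-1) *)
Definition tm (i : nat) : bool := odd (popcount i.-1).

Definition tm_factor (alpha beta : nat) : seq bool :=
  [seq tm i | i <- iota alpha (beta.+1 - alpha)].

Definition antipower (k : nat) (w : seq bool) : bool :=
  (k %| size w) &&
  uniq [seq take (size w %/ k) (drop (j * (size w %/ k)) w) | j <- iota 0 k].

Definition in_F (k m : nat) : bool := odd m && (0 < m) && antipower k (tm_factor 1 (k * m)).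

Definition notin_F (k m : nat) : bool := odd m && (0 < m) && ~~ in_F k m.

Definition is_max_notF (k g : nat) : Prop :=
  notin_F k g /\ forall m, notin_F k m -> m <= g.

(* Gamma(k) = sup of the complement set; equals its maximum whenever the set
   is nonempty and finite (default 0 otherwise, never used). *)
Definition Gamma (k : nat) : nat := epsilon (inhabits 0%N) (is_max_notF k).

From Stdlib Require Import ClassicalEpsilon.
From mathcomp Require Import all_boot all_order all_algebra zify ring lra.
Import Order.TTheory GRing.Theory Num.Theory.

Set Implicit Arguments.
Unset Strict Implicit.

(* Reducing positions modulo 2^e, two factors of the Thue-Morse word t at distance 2^e r with r odd
   compare like factors at the odd distance r, and no factor of length 4 of t recurs at an odd
   distance.  Hence if m is odd and m >= 3k - 3, the k blocks of <1, km> are pairwise distinct, so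
   Gamma k <= 3k - 4, while 1 is never in F(k) since t_2 = t_3.  Conversely, for k = N^2 + N + 2 with
   N = 2^h, two of the blocks of length 3N^2 - N + 1 coincide, so Gamma k / k comes arbitrarily
   close to 3. *)

Lemma popcount_sum L n : n <= L -> popcount n = \sum_(i < L) n %/ 2 ^ i %% 2.
Proof.
elim: L => [|L IHL]; first by rewrite leqn0 => /eqP->; rewrite /popcount !big_ord0.
rewrite leq_eqVlt => /orP[/eqP-> //|ltnL].
rewrite big_ord_recr /= -IHL // divn_small ?addn0 //.
exact: leq_trans ltnL (ltn_expl L (ltnSn 1)).
Qed.

Lemma popcount_half n : popcount n = n %% 2 + popcount (n %/ 2).
Proof.
rewrite (@popcount_sum n.+1) // big_ord_recl expn0 divn1 (@popcount_sum n) ?leq_div //.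
by congr (_ + _); apply: eq_bigr => i _; rewrite expnS divnMA.
Qed.

Lemma popcount_bit b n : b < 2 -> popcount (b + 2 * n) = b + popcount n.
Proof.
move=> lt_b2; rewrite popcount_half.
by rewrite [b + _]addnC mulnC modnMDl divnMDl // modn_small // divn_small ?addn0.
Qed.

Lemma popcount_pow2D e q y : y < 2 ^ e -> popcount (2 ^ e * q + y) = popcount q + popcount y.
Proof.
elim: e y => [|e IHe] y lty.
  by move: lty; rewrite expn0 ltnS leqn0 => /eqP->; rewrite mul1n addn0 /popcount big_ord0 addn0.
have lty2 : y %/ 2 < 2 ^ e by rewrite ltn_divLR // -expnSr.
have -> : 2 ^ e.+1 * q + y = y %% 2 + 2 * (2 ^ e * q + y %/ 2).
  by rewrite [in LHS](divn_eq y 2) expnS; ring.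
rewrite popcount_bit ?ltn_pmod // IHe // [popcount y]popcount_half; ring.
Qed.

Definition tm0 n := odd (popcount n).

Lemma tm0_double n : tm0 (2 * n) = tm0 n.
Proof. by rewrite /tm0 -[2 * n]add0n popcount_bit. Qed.

Lemma tm0_doubleS n : tm0 (2 * n + 1) = ~~ tm0 n.
Proof. by rewrite /tm0 addnC popcount_bit. Qed.

Lemma tm0_pow2D e q y : y < 2 ^ e -> tm0 (2 ^ e * q + y) = tm0 q (+) tm0 y.
Proof. by move=> lty; rewrite /tm0 popcount_pow2D // oddD. Qed.

Lemma tm0_small : [:: tm0 1; tm0 2; tm0 3; tm0 4; tm0 5] = [:: true; true; false; true; false].
Proof. by rewrite /tm0 /popcount !big_ord_recr !big_ord0. Qed.

Lemma tm0_evenS a : ~~ odd a -> tm0 a.+1 = ~~ tm0 a.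
Proof.
by move=> /negbTE a_even; rewrite -(odd_double_half a) a_even add0n -mul2n -addn1 tm0_doubleS tm0_double.
Qed.

Lemma tm0_no_triple a : tm0 a = tm0 a.+1 -> tm0 a.+1 = tm0 a.+2 -> False.
Proof.
have [a_odd | a_even] := boolP (odd a).
  by rewrite (@tm0_evenS a.+1) /= ?a_odd // => _; case: (tm0 a.+1).
by rewrite (tm0_evenS a_even); case: (tm0 a).
Qed.

(* Four letters starting at an even position read [x, ~x, y, ~y]; starting at 2n + 1 they read
   [~t n, t (n+1), ~t (n+1), t (n+2)], so equality would force t n = t (n+1) = t (n+2). *)
Lemma tm0_factor4_parity p q : odd p != odd q -> ~ (forall c, c < 4 -> tm0 (p + c) = tm0 (q + c)).
Proof.
wlog p_even : p q / ~~ odd p.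
  move=> sym pq; have [p_odd | p_even] := boolP (odd p); last exact: (sym p q p_even pq).
  move=> eq_pq; apply: (sym q p).
  - by move: pq; rewrite p_odd; case: (odd q).
  - by rewrite eq_sym.
  - by move=> c /eq_pq.
move=> pq eq_pq; have q_odd : odd q by move: pq; rewrite (negbTE p_even); case: (odd q).
have [n eq_q] : exists n, q = (2 * n).+1.
  by exists q./2; rewrite -[LHS]odd_double_half q_odd -mul2n.
have q0 : q + 0 = 2 * n + 1 by lia.
have q1 : q + 1 = 2 * n.+1 by lia.
have q2 : q + 2 = 2 * n.+1 + 1 by lia.
have q3 : q + 3 = 2 * n.+2 by lia.
have p1 : tm0 (p + 1) = ~~ tm0 (p + 0) by rewrite addn0 addn1 tm0_evenS.
have p3 : tm0 (p + 3) = ~~ tm0 (p + 2) by rewrite addn3 addn2 tm0_evenS //= negbK.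
have := eq_pq 0 isT; have := eq_pq 1 isT; have := eq_pq 2 isT; have := eq_pq 3 isT.
rewrite p1 p3 q0 q1 q2 q3 tm0_doubleS !tm0_double !tm0_doubleS => t3 t2 t1 t0.
by apply: (@tm0_no_triple n); [rewrite -t1 t0 negbK | rewrite -t3 t2 negbK].
Qed.

Lemma tm0_factor_odd_shift a e r : odd r ->
  ~ (forall x, x <= 3 * 2 ^ e -> tm0 (a + x) = tm0 (a + 2 ^ e * r + x)).
Proof.
move=> r_odd eq_shift.
set q := a %/ 2 ^ e; set y := a %% 2 ^ e.
have lt_y : y < 2 ^ e by rewrite ltn_mod expn_gt0.
have eq_a : a = 2 ^ e * q + y by rewrite mulnC [LHS](divn_eq a (2 ^ e)).
apply: (@tm0_factor4_parity q (q + r)); first by rewrite oddD r_odd; case: (odd q).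
move=> c lt_c4; apply: (@addIb (tm0 y)); rewrite -!(tm0_pow2D _ lt_y).
have -> : 2 ^ e * (q + c) + y = a + c * 2 ^ e by rewrite eq_a; ring.
have -> : 2 ^ e * (q + r + c) + y = a + 2 ^ e * r + c * 2 ^ e by rewrite eq_a; ring.
by apply: eq_shift; rewrite leq_mul2r -ltnS lt_c4 orbT.
Qed.

Lemma pow2_mul_odd d : 0 < d -> exists e o, odd o /\ d = 2 ^ e * o.
Proof.
move=> d_gt0; exists (logn 2 d), d`_2^'.
by rewrite odd_2'nat part_pnat -p_part partnC.
Qed.

Lemma tm0_blocks_distinct k m i j : 3 <= k -> odd m -> 3 * k - 3 <= m -> i < j < k ->
  ~ (forall x, x < m -> tm0 (i * m + x) = tm0 (j * m + x)).
Proof.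
move=> k_ge3 m_odd m_ge /andP[lt_ij lt_jk] eq_blocks.
have := @pow2_mul_odd (j - i); rewrite subn_gt0 lt_ij => /(_ isT) [e [o [o_odd eq_ji]]].
have le_pow : 2 ^ e <= j - i by rewrite eq_ji leq_pmulr // odd_gt0.
have lt_m : 3 * 2 ^ e < m.
  have le_m : 3 * 2 ^ e <= m by lia.
  rewrite ltn_neqAle le_m andbT; case: e {eq_ji le_m} le_pow => [|e] le_pow.
  - by rewrite expn0; apply/eqP; lia.
  - by apply: contraTneq m_odd => <-; rewrite expnS !oddM.
apply: (@tm0_factor_odd_shift (i * m) e (o * m)); first by rewrite oddM o_odd.
have -> : i * m + 2 ^ e * (o * m) = j * m by rewrite mulnA -eq_ji -mulnDl subnKC // ltnW.
by move=> x le_x; apply: eq_blocks; apply: leq_ltn_trans lt_m.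
Qed.

Lemma tm_factor1E L : tm_factor 1 L = mkseq tm0 L.
Proof. by rewrite /tm_factor subn1 -[1]addn0 iotaDl -map_comp. Qed.

Lemma take_drop_mkseq (T : Type) (f : nat -> T) a n L : a + n <= L ->
  take n (drop a (mkseq f L)) = mkseq (fun x => f (a + x)) n.
Proof.
move=> le_L; rewrite /mkseq -map_drop -map_take drop_iota take_iota add0n.
have -> : minn n (L - a) = n by apply/minn_idPl; rewrite leq_subRL // (leq_trans (leq_addr n a)).
by rewrite -[a in iota a]addn0 iotaDl -map_comp.
Qed.

Lemma in_FE k m : 0 < k ->
  in_F k m = odd m && uniq [seq mkseq (fun x => tm0 (j * m + x)) m | j <- iota 0 k].
Proof.
move=> k_gt0; rewrite /in_F /antipower tm_factor1E size_mkseq mulKn // dvdn_mulr //=.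
have [m_odd | //] := boolP (odd m); rewrite odd_gt0 //=.
congr uniq; apply/eq_in_map => j; rewrite mem_iota add0n => /andP[_ lt_jk].
by apply: take_drop_mkseq; rewrite -mulSnr leq_mul2r lt_jk orbT.
Qed.

Lemma notin_F_equal_blocks k m i j : odd m -> i < j < k ->
  (forall x, x < m -> tm0 (i * m + x) = tm0 (j * m + x)) -> notin_F k m.
Proof.
move=> m_odd /andP[lt_ij lt_jk] eq_blocks; have lt_ik := ltn_trans lt_ij lt_jk.
rewrite /notin_F m_odd odd_gt0 // in_FE ?(leq_ltn_trans _ lt_jk) // m_odd /=.
apply/(uniqPn (mkseq tm0 0)); exists i, j; rewrite size_map size_iota lt_ij lt_jk.
rewrite !(nth_map 0) ?size_iota // !nth_iota // !add0n; split=> //.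
by apply/eq_in_map => x; rewrite mem_iota add0n => /andP[_ /eq_blocks].
Qed.

Lemma in_F_large k m : 3 <= k -> odd m -> 3 * k - 3 <= m -> in_F k m.
Proof.
move=> k_ge3 m_odd m_ge; rewrite in_FE ?(leq_trans _ k_ge3) // m_odd.
rewrite map_inj_in_uniq ?iota_uniq // => i j; rewrite !mem_iota !add0n => /andP[_ lt_ik] /andP[_ lt_jk].
wlog lt_ij : i j lt_ik lt_jk / i < j.
  move=> sym eq_ij; case: (ltngtP i j) => [lt_ij | lt_ji | //].
  - exact: sym eq_ij.
  - exact/esym/(sym j i).
move=> eq_ij; case: (@tm0_blocks_distinct k m i j k_ge3 m_odd m_ge); first by rewrite lt_ij.
by move=> x lt_xm; have := congr1 (nth false ^~ x) eq_ij; rewrite !nth_mkseq.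
Qed.

Lemma notin_F_1 k : 3 <= k -> notin_F k 1.
Proof.
move=> k_ge3; apply: (@notin_F_equal_blocks k 1 1 2) => // x.
by rewrite ltnS leqn0 => /eqP->; case: tm0_small => -> ->.
Qed.

(* The blocks number N + 1 and N^2 + N + 1 coincide: their x-th letters sit at N^2 (3N + 2 + c) + y
   and N^2 (3N^2 + 2N + 3 + c) + y with c < 3, y < N^2, and t (3N + 2 + c) = t (2 + c) while
   t (3N^2 + 2N + 3 + c) = ~ t (3 + c); these agree because t reads 1 0 1 0 at positions 2..5. *)
Lemma notin_F_pow2 h N : 3 <= h -> N = 2 ^ h -> notin_F (N * N + N + 2) (3 * N * N - N + 1).
Proof.
move=> h_ge3 eq_N; set m := 3 * N * N - N + 1.
have N_ge8 : 8 <= N by rewrite eq_N (leq_pexp2l (isT : 0 < 2) h_ge3).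
have eq_m : m + N = 3 * N * N + 1 by rewrite /m; nia.
have eq_NN : N * N = 2 ^ (h + h) by rewrite expnD eq_N.
have N_even : odd N = false by rewrite eq_N oddX; case: (h) h_ge3.
have m_odd : odd m by have := congr1 odd eq_m; rewrite !oddD !oddM N_even /= addbF.
apply: (@notin_F_equal_blocks _ m (N + 1) (N * N + N + 1)) => // [|x lt_xm]; first by nia.
have lt_x3 : x.+1 < 3 * (N * N) by nia.
set c := x.+1 %/ (N * N); set y := x.+1 %% (N * N).
have lt_c3 : c < 3 by rewrite ltn_divLR ?muln_gt0 ?(leq_trans _ N_ge8).
have lt_y : y < 2 ^ (h + h) by rewrite -eq_NN ltn_mod muln_gt0 (leq_trans _ N_ge8).
have eq_x : x.+1 = c * (N * N) + y by rewrite [LHS](divn_eq _ (N * N)).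
have -> : (N + 1) * m + x = 2 ^ (h + h) * (3 * N + 2 + c) + y by rewrite -eq_NN; nia.
have -> : (N * N + N + 1) * m + x = 2 ^ (h + h) * (3 * N + 2 + c + m) + y by rewrite -eq_NN; nia.
rewrite !tm0_pow2D //; congr addb.
have -> : 3 * N + 2 + c + m = 2 ^ (h + h) * 3 + (2 ^ h * 2 + (3 + c)) by rewrite -eq_NN -eq_N; lia.
have -> : 3 * N + 2 + c = 2 ^ h * 3 + (2 + c) by rewrite -eq_N; ring.
rewrite !tm0_pow2D -?eq_N -?eq_NN; try nia.
have [_ t2 t3 t4 t5] := tm0_small.
by case: c lt_c3 {eq_x} => [|[|[|]]] //= _; rewrite ?t2 ?t3 ?t4 ?t5.
Qed.

Lemma notin_F_le k m : 3 <= k -> notin_F k m -> m <= 3 * k - 4.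
Proof.
move=> k_ge3 /andP[/andP[m_odd _] not_in]; rewrite leqNgt; apply: contra not_in => lt_m.
by apply: in_F_large => //; lia.
Qed.

Lemma Gamma_max k : 3 <= k -> is_max_notF k (Gamma k).
Proof.
move=> k_ge3; apply: epsilon_spec.
have [g g_notin g_max] := ex_maxnP (ex_intro _ 1 (notin_F_1 k_ge3)) (fun m => @notin_F_le k m k_ge3).
by exists g.
Qed.

Lemma Gamma_le k : 3 <= k -> Gamma k <= 3 * k - 4.
Proof. by move=> k_ge3; have [/(notin_F_le k_ge3)] := Gamma_max k_ge3. Qed.

Lemma Gamma_ge k m : 3 <= k -> notin_F k m -> m <= Gamma k.
Proof. by move=> k_ge3; have [_] := Gamma_max k_ge3; apply. Qed.

Section GammaRatio.
Local Open Scope ring_scope.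

Lemma Gamma_ratio_lt (eps : rat) k : 0 < eps -> (3 <= k)%N -> (Gamma k)%:R / k%:R < 3 + eps.
Proof.
move=> eps_gt0 k_ge3; have k_gt0 : 0 < k%:R :> rat by rewrite ltr0n; lia.
have : (Gamma k)%:R < (3 * k)%:R :> rat by rewrite ltr_nat; have := Gamma_le k_ge3; lia.
rewrite ltr_pdivrMr // natrM => lt_G; have := mulr_gt0 eps_gt0 k_gt0; lra.
Qed.

Lemma ratio_pow2_family_gt (eps : rat) N : 0 < eps -> (5 <= N)%N -> 5 / eps < N%:R ->
  3 - eps < (3 * N * N - N + 1)%:R / (N * N + N + 2)%:R.
Proof.
move=> eps_gt0 N_ge5 lt_N; rewrite ltr_pdivlMr ?ltr0n ?addn_gt0 ?orbT //.
set g : rat := N%:R.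
have -> : (3 * N * N - N + 1)%:R = 3 * g * g - g + 1 :> rat.
  by rewrite natrD natrB ?natrM //; nia.
have -> : (N * N + N + 2)%:R = g * g + g + 2 :> rat by rewrite !natrD natrM.
have g_ge5 : 5 <= g by rewrite ler_nat.
have lt_epsg : 5 < eps * g by rewrite mulrC -ltr_pdivrMr.
have : 5 * g < eps * g * g by rewrite ltr_pM2r //; lra.
have : 0 < eps * (g + 2) by rewrite mulr_gt0 //; lra.
lra.
Qed.

Lemma Gamma_ratio_gt_infinitely_often (eps : rat) K : 0 < eps ->
  exists k, (K <= k)%N /\ 3 - eps < (Gamma k)%:R / k%:R.
Proof.
move=> eps_gt0; set h := (Num.bound (5 / eps) + K + 3)%N; set N := (2 ^ h)%N.
have le_hN : (h <= N)%N by apply/ltnW/ltn_expl.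
have le_Kh : (Num.bound (5 / eps) + K + 3 <= h)%N by [].
have N_ge8 : (8 <= N)%N by rewrite -[8%N]/(2 ^ 3)%N leq_pexp2l //; lia.
have lt_bound : 5 / eps < (Num.bound (5 / eps))%:R.
  by apply: archi_boundP; rewrite divr_ge0 // ltW.
exists (N * N + N + 2)%N; split; first by lia.
apply: lt_le_trans (@ratio_pow2_family_gt eps N eps_gt0 _ _) _.
- by lia.
- by apply: lt_le_trans lt_bound _; rewrite ler_nat; lia.
- rewrite ler_wpM2r ?invr_ge0 ?ler0n // ler_nat.
  by apply: Gamma_ge; [lia | apply: (@notin_F_pow2 h); lia].
Qed.

End GammaRatio.

Theorem theorem1 :
  (forall k : nat, 3 <= k ->
     (exists m, notin_F k m) /\
     (exists B, forall m, notin_F k m -> m <= B) /\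
     Gamma k <= 3 * k - 4) /\
  (* limsup_{k -> oo} Gamma(k)/k = 3 *)
  (forall eps : rat, (0 < eps)%R ->
     (exists K : nat, forall k : nat, K <= k ->
        ((Gamma k)%:R / k%:R < 3 + eps :> rat)%R) /\
     (forall K : nat, exists k : nat, K <= k /\
        (3 - eps < (Gamma k)%:R / k%:R :> rat)%R)).
Proof.
split=> [k k_ge3 | eps eps_gt0].
  split; first by exists 1%N; apply: notin_F_1.
  split; last exact: Gamma_le.
  by exists (3 * k - 4)%N => m; apply: notin_F_le.
split=> [|K]; last exact: Gamma_ratio_gt_infinitely_often.
by exists 3%N => k; apply: Gamma_ratio_lt.
Qed.
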